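(* Let $q$ be a prime power and let $n,k,r$ be integers with $n\le q-1$, $0<r<k\le n$, $r\mid k$, $(r+1)\mid n$ and $(r+1)\mid(q-1)$. Write $m=k/r$ and $n=(m+\ell)(r+1)$ with an integer $\ell\ge 0$, so that $t:=n-k-m=\ell(r+1)$. Let $\omega$ be a primitive element of $\mathbb F_q$ and $\alpha=\omega^{(q-1)/(r+1)}$. For $0\le i\le m+\ell-1$ and $j\ge 0$ let $$\mathbf v^{(j)}_i=\big((\omega^i)^j,(\omega^i\alpha)^j,\dots,(\omega^i\alpha^r)^j\big)\in\mathbb F_q^{r+1},$$ and let $\mathbf V^{(j)}=(\mathbf v^{(j)}_0,\dots,\mathbf v^{(j)}_{m+\ell-1})\in\mathbb F_q^n$. Let $\mathbf H$ be the $(m+\ell+\ell r)\times n$ matrix whose rows are: - the $m+\ell$ vectors $\mathbf e_b\in\mathbb F_q^n$ ($0\le b\le m+\ell-1$), where $\mathbf e_b$ has entries $1$ in coordinates $b(r+1),\dots,b(r+1)+r$ and $0$ elsewhere; - the $\ell r$ vectors $\mathbf V^{(j)}$ for $1\le j\le \ell(r+1)-1$ with $(r+1)\nmid j$. Then $\mathbf H$ has full rank $m+\ell+\ell r$. Moreover, the code $\mathcal C=\{\mathbf c\in\mathbb F_q^n:\mathbf H\mathbf c^{T}=\mathbf 0\}$ is a linear $[n,k,t+2]$ code. For every codeword $\mathbf c$ and every $b$, the sum of the coordinates of $\mathbf c$ in the group $\{b(r+1),\dots,b(r+1)+r\}$ is $0$; hence $\mathcal C$ has addition based repair and all-symbol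 locality $r$.
   Context: A linear code has addition based repair if every coordinate (node) $i$ has a set $J_i$ of other coordinates with $c_i=-\sum_{j\in J_i}c_j$ for all codewords $\mathbf c$. It has all-symbol locality $r$ if every node can be recovered, for all codewords, as a function of at most $r$ other nodes. *)

From HB Require Import structures.
From mathcomp Require Import all_boot all_order all_algebra.
Set Implicit Arguments. Unset Strict Implicit. Unset Printing Implicit Defensive.
Import GRing.Theory.
Local Open Scope ring_scope.

Section Defs.
Variable F : fieldType.

Definition wt n (c : 'rV[F]_n) : nat := #|[pred i : 'I_n | c 0 i != 0]|.

Definition code s n (H : 'M[F]_(s, n)) : 'M[F]_n := kermx H^T.
Definition codeword s n (H : 'M[F]_(s, n)) (c : 'rV[F]_n) : bool :=
  (c <= code H)%MS.

Definition min_distance n (C : 'M[F]_n) (d : nat) : Prop :=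
  (exists2 c : 'rV[F]_n, (c <= C)%MS & (c != 0) /\ wt c = d) /\
  (forall c : 'rV[F]_n, (c <= C)%MS -> c != 0 -> (d <= wt c)%N).

Definition is_nkd_code n (C : 'M[F]_n) (k d : nat) : Prop :=
  \rank C = k /\ min_distance C d.

Definition addition_based_repair n (C : 'M[F]_n) : Prop :=
  forall i : 'I_n, exists J : {set 'I_n}, i \notin J /\
    forall c : 'rV[F]_n, (c <= C)%MS -> c 0 i = - \sum_(j in J) c 0 j.

Definition all_symbol_locality n (C : 'M[F]_n) (r : nat) : Prop :=
  forall i : 'I_n, exists R : {set 'I_n},
    [/\ i \notin R, (#|R| <= r)%N &
      exists f : ('I_n -> F) -> F,
        (forall x y : 'I_n -> F, (forall j, j \in R -> x j = y j) -> f x = f y) /\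
        forall c : 'rV[F]_n, (c <= C)%MS -> c 0 i = f (fun j => c 0 j)].

(* The construction.  Coordinate p : 'I_n lies in group p %/ (r+1), at
   position p %% (r+1) inside the group. *)
Definition e_vec n r (b : nat) : 'rV[F]_n :=
  \row_(p < n) (if (p %/ r.+1 == b)%N then 1 else 0).

Definition V_vec n r (omega alpha : F) (j : nat) : 'rV[F]_n :=
  \row_(p < n) ((omega ^+ (p %/ r.+1) * alpha ^+ (p %% r.+1)) ^+ j).

Definition H_rows n r m l (omega alpha : F) : seq 'rV[F]_n :=
  [seq e_vec n r b | b <- iota 0 (m + l)] ++
  [seq V_vec n r omega alpha j | j <- iota 1 (l * r.+1).-1 & ~~ (r.+1 %| j)%N].

Definition H_mat n r m l (omega alpha : F) :
  'M[F]_(size (H_rows n r m l omega alpha), n) :=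
  \matrix_(i < size (H_rows n r m l omega alpha))
     nth 0 (H_rows n r m l omega alpha) i.
End Defs.

(* Coordinate p = b(r+1) + s carries the point x_p = omega^b alpha^s; these n points
   are distinct because omega^(b + s(q-1)/(r+1)) has exponent below q - 1.  A word c is
   in the code iff every group of r+1 coordinates sums to 0 and sum_p c_p x_p^j = 0 for
   the exponents j of the V rows; as alpha^(r+1) = 1, x_p^j only depends on the group of
   p when (r+1) | j, so the group conditions give the remaining power sums and all
   power sums of degree at most t vanish, whence weight >= t + 2 by a Vandermonde
   argument.  The rows are independent: a vanishing combination yields a polynomial with
   exponents j, alpha^j <> 1, that is constant on each group {x, alpha x, ...}, hence
   invariant under z |-> alpha z at n > t points, hence zero.  On the first t + 2
   coordinates only t + 1 rows are nonzero, which gives a word of weight exactly t + 2;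
   and each coordinate is minus the sum of the other r coordinates of its group. *)

From HB Require Import structures.
From mathcomp Require Import all_boot all_order all_algebra.
From mathcomp Require Import zify.
Set Implicit Arguments. Unset Strict Implicit. Unset Printing Implicit Defensive.
Import GRing.Theory.
Local Open Scope ring_scope.

Section LinearCodes.
Variable F : fieldType.

Lemma sub_codeP s n (H : 'M[F]_(s, n)) (c : 'rV[F]_n) :
  reflect (forall i, \sum_p c 0 p * H i p = 0) (c <= code H)%MS.
Proof.
have cHE i : (c *m H^T) 0 i = \sum_p c 0 p * H i p.
  by rewrite mxE; apply: eq_bigr => p _; rewrite mxE.
rewrite /code sub_kermx; apply: (iffP eqP) => [cH i | cH].
  by rewrite -cHE cH mxE.
by apply/rowP => i; rewrite cHE cH mxE.
Qed.

Lemma mxrank_leq_card_rows s d (A : 'M[F]_(s, d)) (P : {pred 'I_s}) :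
  (forall i, i \notin P -> row i A = 0) -> (\rank A <= #|P|)%N.
Proof.
move=> A0; apply: leq_trans (rank_leq_row (rowsub (@enum_val _ P) A)).
apply/mxrankS/row_subP => i; have [Pi | /A0 ->] := boolP (i \in P); last exact: sub0mx.
by rewrite -(enum_rankK_in Pi Pi) -row_rowsub row_sub.
Qed.

Lemma exists_codeword_wt_leq s n d (H : 'M[F]_(s, n)) (hd : (d <= n)%N) :
  (\rank (colsub (widen_ord hd) H) < d)%N ->
  exists2 c : 'rV[F]_n, (c <= code H)%MS & c != 0 /\ (wt c <= d)%N.
Proof.
move=> rkH; pose E := (colsub (widen_ord hd) (1%:M : 'M[F]_n))^T.
pose y := nz_row (kermx (colsub (widen_ord hd) H)^T).
have y0 : y != 0.
  by rewrite nz_row_eq0 -mxrank_eq0 mxrank_ker mxrank_tr -lt0n subn_gt0.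
have yH : y *m (colsub (widen_ord hd) H)^T = 0 by apply/sub_kermxP/nz_row_sub.
have cE j : (y *m E) 0 j = \sum_(i < d | widen_ord hd i == j) y 0 i.
  rewrite mxE [RHS]big_mkcond; apply: eq_bigr => i _.
  by rewrite !mxE eq_sym; case: eqP; rewrite ?mulr1 ?mulr0.
exists (y *m E); first by rewrite /code sub_kermx -mulmxA -trmx_mul mulmx_colsub mulmx1 yH.
split.
  apply: contraNneq y0 => /rowP c0; apply/eqP/rowP => i.
  by have := c0 (widen_ord hd i); rewrite cE big_pred1_eq ?mxE // => j;
    apply/eqP/eqP => [/val_inj|->].
rewrite /wt -[X in (_ <= X)%N]card_ord.
apply: leq_trans (leq_imset_card (widen_ord hd) 'I_d).
apply/subset_leq_card/subsetP => j; rewrite inE cE; apply: contraR => /imsetP nj.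
by rewrite big_pred0 // => i; apply/eqP => e; apply: nj; exists i.
Qed.

Lemma sum_mul_horner_eq0 n d (x : 'I_n -> F) (c : 'rV[F]_n) (f : {poly F}) :
  (forall j, (j <= d)%N -> \sum_p c 0 p * x p ^+ j = 0) -> (size f <= d.+1)%N ->
  \sum_p c 0 p * f.[x p] = 0.
Proof.
move=> cx szf; under eq_bigr do rewrite horner_coef big_distrr.
rewrite exchange_big big1 //= => j _.
under eq_bigr do rewrite mulrCA.
by rewrite -big_distrr /= cx ?mulr0 // -ltnS (leq_trans (ltn_ord j)).
Qed.

Lemma wt_geq_of_power_sums n d (x : 'I_n -> F) (c : 'rV[F]_n) :
  injective x -> (forall j, (j <= d)%N -> \sum_p c 0 p * x p ^+ j = 0) ->
  c != 0 -> (d.+2 <= wt c)%N.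
Proof.
move=> x_inj cx c0; rewrite leqNgt; apply/negP => wtc.
have [p0 cp0] : exists p0, c 0 p0 != 0.
  apply/existsP; apply: contraNT c0 => /existsPn c0.
  by apply/eqP/rowP => p; rewrite mxE; apply/eqP/negPn.
pose T := [set p | c 0 p != 0] :\ p0.
have cardT : (#|T| <= d)%N.
  have wtE : wt c = #|[set p | c 0 p != 0]| by apply: eq_card => p; rewrite inE.
  by move: wtc; rewrite wtE (cardsD1 p0) inE cp0.
pose f := \prod_(z <- [seq x p | p in T]) ('X - z%:P).
have rootf p : root f (x p) = (p \in T).
  by rewrite root_prod_XsubC (mem_map x_inj) mem_enum.
have fc : \sum_p c 0 p * f.[x p] = c 0 p0 * f.[x p0].
  rewrite (bigD1 p0) //= big1 ?addr0 // => p p_p0.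
  have [->|cp] := eqVneq (c 0 p) 0; first by rewrite mul0r.
  by move/rootP: (rootf p); rewrite !inE p_p0 cp => ->; rewrite ?mulr0.
have /negP[] : c 0 p0 * f.[x p0] != 0.
  by rewrite mulf_neq0 // -/(root f _) rootf !inE eqxx.
rewrite -fc (sum_mul_horner_eq0 cx) //.
by rewrite size_prod_XsubC size_map -cardE.
Qed.

Lemma poly_eq0_of_dilation_roots (a : {poly F}) (alpha : F) (S : seq F) :
  (forall j, a`_j != 0 -> alpha ^+ j != 1) -> uniq S -> (size a <= size S)%N ->
  {in S, forall z, a.[alpha * z] = a.[z]} -> a = 0.
Proof.
move=> a_alpha uS szS aS.
pose D := \poly_(j < size a) (a`_j * (alpha ^+ j - 1)).
have DE z : D.[z] = a.[alpha * z] - a.[z].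
  rewrite horner_poly !horner_coef -sumrB; apply: eq_bigr => j _.
  by rewrite exprMn mulrBr mulrBl mulr1 mulrA.
have D0 : D = 0.
  apply: (roots_geq_poly_eq0 (rs := S)) => //.
    by apply/allP => z zS; rewrite /root DE aS ?subrr.
  exact: leq_trans (size_poly _ _) szS.
apply/polyP => j; rewrite coef0; apply/eqP; apply: contraT => aj.
have /eqP := congr1 (fun p : {poly F} => p`_j) D0.
rewrite coef_poly coef0; case: ltnP => [_|/leq_sizeP/(_ j (leqnn j)) a0]; last first.
  by rewrite a0 eqxx in aj.
by rewrite mulf_eq0 subr_eq0 (negPf aj) (negPf (a_alpha _ aj)).
Qed.
End LinearCodes.

Lemma card_ord_pred s (Q : pred nat) : #|[pred i : 'I_s | Q i]| = count Q (iota 0 s).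
Proof. by rewrite -val_enum_ord count_map cardE -size_filter enumT. Qed.

Lemma count_not_dvdn d u :
  count (fun j => ~~ (d.+1 %| j)%N) (iota 0 (u * d.+1)) = (u * d)%N.
Proof.
elim: u => [|u IHu] //; rewrite mulSnr iotaD count_cat IHu /= dvdn_mull //= mulSnr.
congr (_ + _)%N; rewrite -[RHS](size_iota (u * d.+1).+1); apply/eqP; rewrite -all_count.
apply/allP => j; rewrite mem_iota => /andP[uj ju].
rewrite -(subnKC (ltnW uj)) dvdn_addr ?dvdn_mull // gtnNdvd //; lia.
Qed.

Lemma count_ltn_iota j n : (j <= n)%N -> count (fun i => i < j)%N (iota 0 n) = j.
Proof. by move=> jn; rewrite -size_filter (filter_iota_ltn 0 jn) size_iota. Qed.

Section Construction.
Variables (F : finFieldType) (q n r m l : nat) (omega : F).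
Hypotheses (hm0 : (0 < m)%N) (hr0 : (0 < r)%N) (hnq : (n <= q - 1)%N)
  (hrdq : (r.+1 %| q - 1)%N) (hl : n = ((m + l) * r.+1)%N)
  (homega : (q - 1).-primitive_root omega).

Local Notation N := (m + l)%N.
Local Notation t := (l * r.+1)%N.
Local Notation Qd := ((q - 1) %/ r.+1)%N.
Local Notation alpha := (omega ^+ Qd).

Definition eval_point (p : nat) : F := omega ^+ (p %/ r.+1) * alpha ^+ (p %% r.+1).

Definition V_exps : seq nat := [seq j <- iota 1 t.-1 | ~~ (r.+1 %| j)%N].

Definition V_comb (Z : nat -> F) (z : F) : F :=
  \sum_(k < l * r) Z k * z ^+ nth 0%N V_exps k.

Local Notation H := (H_mat n r m l omega alpha).

Lemma Qd_mul : (Qd * r.+1)%N = (q - 1)%N.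
Proof. exact: divnK. Qed.

Lemma block_lt (p : 'I_n) : (p %/ r.+1 < N)%N.
Proof. by rewrite ltn_divLR // -hl. Qed.

Lemma N_leq_Qd : (N <= Qd)%N.
Proof. by rewrite -(leq_pmul2r (ltn0Sn r)) Qd_mul -hl. Qed.

Lemma Qd_gt0 : (0 < Qd)%N.
Proof. by apply: leq_trans N_leq_Qd; rewrite addn_gt0 hm0. Qed.

Lemma alpha_expr_eq1 j : (alpha ^+ j == 1) = (r.+1 %| j)%N.
Proof.
by rewrite -exprM -(prim_order_dvd homega) -[X in (X %| _)%N]Qd_mul dvdn_pmul2l ?Qd_gt0.
Qed.

Lemma alpha_order : alpha ^+ r.+1 = 1.
Proof. by apply/eqP; rewrite alpha_expr_eq1. Qed.

Lemma eval_pointE p : eval_point p = omega ^+ (p %/ r.+1 + Qd * (p %% r.+1)).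
Proof. by rewrite /eval_point exprD exprM. Qed.

Lemma eval_point_inj : injective (fun p : 'I_n => eval_point p).
Proof.
have exp_lt (p : 'I_n) : (p %/ r.+1 + Qd * (p %% r.+1) < q - 1)%N.
  have blk := leq_trans (block_lt p) N_leq_Qd.
  have : (Qd * (p %% r.+1) <= Qd * r)%N by rewrite leq_mul2l -ltnS ltn_pmod ?orbT.
  rewrite -[X in (_ < X)%N]Qd_mul; lia.
move=> p p'; rewrite /= !eval_pointE => /eqP; rewrite (eq_prim_root_expr homega).
rewrite !(modn_small (exp_lt _)) => /eqP e.
have blk_lt (u : 'I_n) : (u %/ r.+1 < Qd)%N := leq_trans (block_lt u) N_leq_Qd.
have eblk : (p %/ r.+1 = p' %/ r.+1)%N.
  move: (congr1 (modn^~ Qd) e).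
  by rewrite !(addnC (_ %/ _)%N) !(mulnC Qd) !modnMDl !modn_small.
have epos : (p %% r.+1 = p' %% r.+1)%N.
  by move: e; rewrite eblk => /addnI /eqP; rewrite eqn_mul2l gtn_eqF ?Qd_gt0 // => /eqP.
by apply: val_inj; rewrite /= (divn_eq p r.+1) (divn_eq p' r.+1) eblk epos.
Qed.

Lemma eval_point_shift (p : 'I_n) :
  exists2 p' : 'I_n, (p' %/ r.+1 = p %/ r.+1)%N & eval_point p' = alpha * eval_point p.
Proof.
have pos_lt : ((p %% r.+1).+1 %% r.+1 < r.+1)%N by rewrite ltn_pmod.
have p'_lt : (p %/ r.+1 * r.+1 + (p %% r.+1).+1 %% r.+1 < n)%N.
  have := block_lt p; nia.
exists (Ordinal p'_lt) => /=; first by rewrite divnMDl // (divn_small pos_lt) addn0.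
rewrite /eval_point divnMDl // (divn_small pos_lt) addn0 modnMDl.
by rewrite modn_mod (expr_mod _ alpha_order) exprS mulrCA.
Qed.

Lemma eval_point_expr_block p u :
  eval_point p ^+ (r.+1 * u) = omega ^+ (p %/ r.+1 * (r.+1 * u)).
Proof.
rewrite /eval_point exprMn -(exprM alpha) mulnCA (exprM alpha) alpha_order.
by rewrite expr1n mulr1 -exprM.
Qed.

Lemma size_V_exps : size V_exps = (l * r)%N.
Proof.
rewrite size_filter -(count_not_dvdn r l).
by case: l => // l'; rewrite mulSn addSn /= dvdn0.
Qed.

Lemma mem_V_exps j : (j \in V_exps) = [&& (0 < j)%N, (j < t)%N & ~~ (r.+1 %| j)%N].
Proof. by rewrite mem_filter mem_iota andbC; case: t => [|t'] /=; lia. Qed.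

Lemma uniq_V_exps : uniq V_exps.
Proof. by rewrite filter_uniq // iota_uniq. Qed.

Lemma size_H_rows : size (H_rows n r m l omega alpha) = (N + l * r)%N.
Proof. by rewrite size_cat !size_map size_iota -size_V_exps. Qed.

Lemma H_mxE i (p : 'I_n) : H i p =
  if (i < N)%N then (if (p %/ r.+1 == i)%N then 1 else 0)
  else eval_point p ^+ nth 0%N V_exps (i - N).
Proof.
have iN : (i < N + l * r)%N by rewrite -size_H_rows.
rewrite mxE /H_rows nth_cat size_map size_iota; case: ltnP => i_N.
  by rewrite (nth_map 0%N) ?size_iota // nth_iota // mxE.
by rewrite (nth_map 0%N) ?mxE // size_V_exps ltn_subLR.
Qed.

Lemma code_group_sum (c : 'rV[F]_n) b : (c <= code H)%MS -> (b < N)%N ->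
  \sum_(p < n | (p %/ r.+1 == b)%N) c 0 p = 0.
Proof.
move=> /sub_codeP cH bN; have bH : (b < size (H_rows n r m l omega alpha))%N.
  by rewrite size_H_rows ltn_addr.
rewrite big_mkcond -[RHS](cH (Ordinal bH)); apply: eq_bigr => p _.
by rewrite H_mxE /= bN; case: eqP; rewrite ?mulr1 ?mulr0.
Qed.

Lemma code_power_sum (c : 'rV[F]_n) j : (c <= code H)%MS -> (j <= t)%N ->
  \sum_p c 0 p * eval_point p ^+ j = 0.
Proof.
move=> cC jt; have [/dvdnP[u ->]|r_j] := boolP (r.+1 %| j)%N.
  rewrite (partition_big (fun p : 'I_n => Ordinal (block_lt p)) xpredT) //= big1 // => b _.
  under eq_bigr => p /eqP/(congr1 val)/= bp do rewrite mulnC eval_point_expr_block bp.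
  by rewrite -big_distrl /= (code_group_sum cC (ltn_ord b)) mul0r.
have j_V_exps : j \in V_exps.
  rewrite mem_V_exps r_j andbT lt0n [(j < t)%N]ltn_neqAle jt andbT.
  by apply/andP; split; apply: contraNneq r_j => ->; rewrite ?dvdn0 ?dvdn_mull.
have jH : (N + index j V_exps < size (H_rows n r m l omega alpha))%N.
  by rewrite size_H_rows ltn_add2l -size_V_exps index_mem.
move/sub_codeP/(_ (Ordinal jH)): cC => cH; rewrite -[RHS]cH; apply: eq_bigr => p _.
by rewrite H_mxE /= ltnNge leq_addr addKn nth_index.
Qed.

Lemma code_wt_geq (c : 'rV[F]_n) : (c <= code H)%MS -> c != 0 -> (t.+2 <= wt c)%N.
Proof.
by move=> cC; apply: wt_geq_of_power_sums eval_point_inj _ => j; apply: code_power_sum.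
Qed.

Lemma mulmx_H (y : 'rV[F]_(size (H_rows n r m l omega alpha))) (Y : nat -> F) :
  (forall i, y 0 i = Y i) -> forall p : 'I_n,
  (y *m H) 0 p = Y (p %/ r.+1)%N + V_comb (fun k => Y (N + k)%N) (eval_point p).
Proof.
move=> yY p; rewrite mxE; under eq_bigr => i _ do rewrite yY H_mxE.
pose G i := Y i * (if (i < N)%N then (if (p %/ r.+1 == i)%N then 1 else 0)
                   else eval_point p ^+ nth 0%N V_exps (i - N)).
rewrite (eq_bigr (G \o val)) // -(big_mkord xpredT G) size_H_rows big_mkord big_split_ord /=.
congr (_ + _).
  transitivity (\sum_(i < N | i == (p %/ r.+1)%N :> nat) Y i).
    rewrite [RHS]big_mkcond; apply: eq_bigr => i _ /=.
    by rewrite /G ltn_ord eq_sym; case: eqP; rewrite ?mulr1 ?mulr0.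
  by rewrite big_ord1_eq block_lt.
by apply: eq_bigr => k _; rewrite /G ltnNge leq_addr addKn.
Qed.

Lemma V_exps_sum_block_invariant_eq0 (Z : nat -> F) :
  (forall p p' : 'I_n, (p %/ r.+1 = p' %/ r.+1)%N ->
     V_comb Z (eval_point p) = V_comb Z (eval_point p')) ->
  forall k, (k < l * r)%N -> Z k = 0.
Proof.
move=> blockZ; pose a := \sum_(k < l * r) Z k *: 'X^(nth 0%N V_exps k).
have aE z : a.[z] = V_comb Z z.
  by rewrite horner_sum; apply: eq_bigr => k _; rewrite hornerZ hornerXn.
have nth_V_exps (k : 'I_(l * r)) : nth 0%N V_exps k \in V_exps by rewrite mem_nth ?size_V_exps.
have a0 : a = 0.
  apply: (@poly_eq0_of_dilation_roots _ _ alpha [seq eval_point (val p) | p <- enum 'I_n]).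
  - move=> j; rewrite coef_sumMXn alpha_expr_eq1; apply: contraNN => r_j.
    rewrite big_pred0 // => k; apply: contraTF r_j => /eqP <-.
    by move: (nth_V_exps k); rewrite mem_V_exps => /and3P[].
  - by rewrite map_inj_uniq ?enum_uniq //; apply: eval_point_inj.
  - rewrite size_map size_enum_ord; apply: (big_ind (fun b : {poly F} => size b <= n)%N).
    + by rewrite size_poly0.
    + by move=> b b' ? ?; rewrite (leq_trans (size_polyD _ _)) // geq_max; apply/andP.
    + move=> k _; rewrite (leq_trans (size_scale_leq _ _)) // size_polyXn.
      by move: (nth_V_exps k); rewrite mem_V_exps hl => /and3P[_ ? _]; nia.
  - move=> _ /mapP[p _ ->]; have [p' blk <-] := eval_point_shift p.
    by rewrite !aE; apply: blockZ.
move=> k lt_k; have /polyP/(_ (nth 0%N V_exps k)) := a0.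
rewrite coef_sumMXn coef0 (big_pred1 (Ordinal lt_k)) // => k'.
by rewrite /= nth_uniq ?size_V_exps ?uniq_V_exps.
Qed.

Lemma row_free_H : row_free H.
Proof.
rewrite -kermx_eq0; apply/rowV0P => y /sub_kermxP yH.
pose Y i := oapp (y 0) 0 (insub i).
have yY i : y 0 i = Y i by rewrite /Y valK.
have colY (p : 'I_n) : Y (p %/ r.+1)%N + V_comb (fun k => Y (N + k)%N) (eval_point p) = 0.
  by rewrite -(mulmx_H yY) yH mxE.
have YV : forall k, (k < l * r)%N -> Y (N + k)%N = 0.
  apply: (V_exps_sum_block_invariant_eq0 (Z := fun k => Y (N + k)%N)) => p p' blk.
  by apply: (@addrI _ (Y (p %/ r.+1)%N)); rewrite colY blk colY.
have Yblock b : (b < N)%N -> Y b = 0.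
  move=> bN; have bp : (b * r.+1 < n)%N by rewrite hl ltn_mul2r bN.
  have := colY (Ordinal bp); rewrite /V_comb big1 ?addr0 /= ?mulnK // => k _.
  by rewrite YV ?mul0r.
apply/rowP => i; rewrite mxE yY; case: (ltnP i N) => [/Yblock //|iN].
have : (i - N < l * r)%N by rewrite ltn_subLR // -size_H_rows.
by move/YV; rewrite subnKC.
Qed.

Lemma exists_code_wt : exists2 c : 'rV[F]_n, (c <= code H)%MS & c != 0 /\ wt c = t.+2.
Proof.
have hd : (t.+2 <= n)%N by rewrite hl; nia.
(* On the first t + 2 coordinates the rows of index l < i < N vanish. *)
pose P := [pred i : 'I_(size (H_rows n r m l omega alpha)) | (i < l.+1) || (N <= i)]%N.
have cardP : (#|P| <= t.+1)%N.
  rewrite [#|P|](card_ord_pred _ (fun i => (i < l.+1) || (N <= i))%N) size_H_rows.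
  have countN : count (fun i => N <= i)%N (iota 0 (N + l * r)) = (l * r)%N.
    have := count_predC (fun i => i < N)%N (iota 0 (N + l * r)).
    rewrite count_ltn_iota ?leq_addr // size_iota => /addnI e.
    by rewrite -[in RHS]e; apply: eq_in_count => i _; rewrite /= leqNgt.
  have := count_predUI (fun i => i < l.+1)%N (fun i => N <= i)%N (iota 0 (N + l * r)).
  rewrite countN count_ltn_iota; last by lia.
  move=> e; rewrite mulnS -addSn -e; exact: leq_addr.
have [c cC [c0 wtc]] : exists2 c : 'rV[F]_n, (c <= code H)%MS & c != 0 /\ (wt c <= t.+2)%N.
  apply: (@exists_codeword_wt_leq _ _ _ _ H hd); rewrite ltnS (leq_trans _ cardP) //.
  apply: mxrank_leq_card_rows => i; rewrite inE negb_or -leqNgt -ltnNge => /andP[li iN].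
  apply/rowP => j; rewrite mxE [RHS]mxE mxE H_mxE iN; case: eqP => // blk; exfalso.
  have : (j %/ r.+1 < l.+1)%N by rewrite ltn_divLR //; have := ltn_ord j; nia.
  by rewrite blk; lia.
by exists c => //; split => //; apply/eqP; rewrite eqn_leq wtc code_wt_geq.
Qed.
End Construction.

Section GroupRepair.
Variables (F : fieldType) (n r : nat) (C : 'M[F]_n).
Hypothesis group_sum0 : forall c : 'rV[F]_n, (c <= C)%MS -> forall i : 'I_n,
  \sum_(p < n | (p %/ r.+1 == i %/ r.+1)%N) c 0 p = 0.

Definition repair_group (i : 'I_n) : {set 'I_n} :=
  [set p : 'I_n | (p %/ r.+1 == i %/ r.+1)%N & p != i].

Lemma notin_repair_group i : i \notin repair_group i.
Proof. by rewrite inE !eqxx. Qed.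

Lemma repair_groupE (c : 'rV[F]_n) i : (c <= C)%MS ->
  c 0 i = - \sum_(p in repair_group i) c 0 p.
Proof.
move/group_sum0/(_ i); rewrite (bigD1 i) //= => /eqP; rewrite addr_eq0 => /eqP ->.
by congr (- _); apply: eq_bigl => p; rewrite inE.
Qed.

Lemma card_repair_group i : (#|repair_group i| <= r)%N.
Proof.
pose pos (p : 'I_n) : 'I_r.+1 := Ordinal (ltn_pmod p (ltn0Sn r)).
have pos_inj : {in repair_group i &, injective pos}.
  move=> p p'; rewrite !inE => /andP[/eqP bp _] /andP[/eqP bp' _] /(congr1 val) /= e.
  by apply: val_inj; rewrite /= (divn_eq p r.+1) (divn_eq p' r.+1) bp bp' e.
rewrite -(card_in_imset pos_inj) -ltnS -[X in (_ < X)%N](card_ord r.+1).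
apply: proper_card; apply/properP; split; first exact: subset_predT.
exists (pos i) => //; apply/imsetP => -[p].
rewrite inE => /andP[/eqP bp /eqP pi] /(congr1 val) /= e; apply: pi.
by apply: val_inj; rewrite /= (divn_eq p r.+1) (divn_eq i r.+1) bp e.
Qed.

Lemma group_addition_based_repair : addition_based_repair C.
Proof.
move=> i; exists (repair_group i); split; first exact: notin_repair_group.
by move=> c /repair_groupE.
Qed.

Lemma group_all_symbol_locality : all_symbol_locality C r.
Proof.
move=> i; exists (repair_group i).
split; [exact: notin_repair_group | exact: card_repair_group |].
exists (fun x => - \sum_(p in repair_group i) x p); split; last by move=> c /repair_groupE.
by move=> x y xy; congr (- _); apply: eq_bigr => p /xy.
Qed.
End GroupRepair.

Theorem mainTheorem7 (F : finFieldType) (q n k r m l : nat) (omega : F)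
  (hq : #|F| = q)
  (hnq : (n <= q - 1)%N) (hr0 : (0 < r)%N) (hrk : (r < k)%N) (hkn : (k <= n)%N)
  (hrdk : (r %| k)%N) (hrdn : (r.+1 %| n)%N) (hrdq : (r.+1 %| q - 1)%N)
  (hm : k = (m * r)%N) (hl : n = ((m + l) * r.+1)%N)
  (homega : (q - 1).-primitive_root omega) :
  let alpha := omega ^+ ((q - 1) %/ r.+1) in
  let t := (l * r.+1)%N in
  let H := H_mat n r m l omega alpha in
  let C := code H in
  [/\ size (H_rows n r m l omega alpha) = (m + l + l * r)%N,
      \rank H = (m + l + l * r)%N &
      is_nkd_code C k t.+2] /\
  [/\ (forall c : 'rV[F]_n, (c <= C)%MS -> forall b : nat, (b < m + l)%N ->
          \sum_(p < n | (p %/ r.+1 == b)%N) c 0 p = 0),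
      addition_based_repair C &
      all_symbol_locality C r].
Proof.
move=> alpha t H C.
have hm0 : (0 < m)%N by move: hrk; rewrite hm; case: (m).
have rankH : \rank H = (m + l + l * r)%N.
  by rewrite (eqP (row_free_H hm0 hr0 hnq hrdq hl homega)) size_H_rows.
have group_sum c (cC : (c <= C)%MS) b (bN : (b < m + l)%N) := code_group_sum cC bN.
have group_sum0 c (cC : (c <= C)%MS) (i : 'I_n) := group_sum c cC _ (block_lt hl i).
split; split.
- exact: size_H_rows.
- exact: rankH.
- split; first by rewrite /C /code mxrank_ker mxrank_tr rankH hm hl; nia.
  by split; [exact: exists_code_wt | exact: code_wt_geq].
- exact: group_sum.
- exact: group_addition_based_repair group_sum0.
- exact: group_all_symbol_locality group_sum0.
Qed.
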